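(* Let $n\ge 4$. Let $B_1$ and $B_2$ be squares of type B for the EvenQuads-$2^n$ deck, and suppose they have the same repeat pattern up to shuffling rows/columns and reflection along the main diagonal; that is, there is a map $t$ of the set of $16$ positions, which is a composition of a permutation of the rows, a permutation of the columns, and possibly the reflection along the main diagonal, such that for all positions $p,q$ one has $B_1(p)=B_1(q)$ if and only if $B_2(t(p))=B_2(t(q))$. Then the number of legit pairs of $B_1$ equals the number of legit pairs of $B_2$.
   Context: Cards of the EvenQuads-$2^n$ deck are the integers $0,\dots,2^n-1$; four integers form a quad iff their bitwise XOR $\oplus$ is $0$. In this context a square is a $4\times4$ array of such integers (repetitions allowed) in which every row and every column has bitwise XOR $0$. A square of type A is such a square with all entries in $\{0,\dots,15\}$, first row $0,1,2,3$ and first column $0,4,8,12$. A square of type B is such a square with all entries divisible by $16$ (and less than $2^n$), whose first row and first column consist of zeros. A square of type C is such a square with $16$ pairwise distinct entries, first row $0,1,2,3$ and first column $0,4,8,12$. The repeat pattern of a square of type B is the set of pairs of positions in which it has equal entries. Given a square $B$ of type B, a square $A$ of type A is a legit pair of $B$ if the entrywise sum $A+B$ has no repeated entries (then $A+B$ is of type C). *)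

From mathcomp Require Import all_boot all_fingroup.
Set Implicit Arguments. Unset Strict Implicit. Unset Printing Implicit Defensive.

(* Positions of a 4x4 array: (row, column). *)
Definition pos := ('I_4 * 'I_4)%type.

Definition o0 : 'I_4 := @Ordinal 4 0 isT.
Definition o1 : 'I_4 := @Ordinal 4 1 isT.
Definition o2 : 'I_4 := @Ordinal 4 2 isT.
Definition o3 : 'I_4 := @Ordinal 4 3 isT.

Definition bxor (a b : nat) : nat := Nat.lxor a b.

Definition quad (a b c d : nat) : bool := bxor (bxor (bxor a b) c) d == 0.

Definition is_square (S : pos -> nat) : bool :=
  [forall i : 'I_4, quad (S (i, o0)) (S (i, o1)) (S (i, o2)) (S (i, o3))]
  && [forall j : 'I_4, quad (S (o0, j)) (S (o1, j)) (S (o2, j)) (S (o3, j))].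

Definition typeB (n : nat) (B : pos -> nat) : bool :=
  [&& is_square B,
      [forall p : pos, (16 %| B p) && (B p < 2 ^ n)],
      [forall j : 'I_4, B (o0, j) == 0] &
      [forall i : 'I_4, B (i, o0) == 0]].

Definition typeA (A : {ffun pos -> 'I_16}) : bool :=
  [&& is_square (fun p => nat_of_ord (A p)),
      [forall j : 'I_4, nat_of_ord (A (o0, j)) == nat_of_ord j] &
      [forall i : 'I_4, nat_of_ord (A (i, o0)) == 4 * nat_of_ord i]].

Definition no_repeats (S : pos -> nat) : bool :=
  [forall p : pos, forall q : pos, (S p == S q) ==> (p == q)].

Definition legit_pairs (B : pos -> nat) : {set {ffun pos -> 'I_16}} :=
  [set A : {ffun pos -> 'I_16} |
     typeA A && no_repeats (fun p => nat_of_ord (A p) + B p)].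

Definition shuffle (r c : {perm 'I_4}) (tr : bool) (p : pos) : pos :=
  if tr then (r p.2, c p.1) else (r p.1, c p.2).

(* Read a legit pair A of B1 through the inverse shuffle. The result S is
   still a square with entries below 16, and since B2 vanishes on the first
   row and column while A + B1 has no repeats, the first row and first column
   of S meet only in the corner. Hence there is a unique affine bijection of
   F_2^4 (for XOR) mapping S into type A form, i.e. its first row to 0,1,2,3
   and its first column to 0,4,8,12. Affine maps preserve quads and equality
   of entries, so the image is a legit pair of B2; and it determines A,
   because a type A square is determined by which quadruples of its entries
   form quads. This injection and the symmetric one give equal counts. *)

From Stdlib Require Import PeanoNat.
From HB Require Import structures.
From mathcomp Require Import all_boot all_fingroup zify.
Set Implicit Arguments. Unset Strict Implicit. Unset Printing Implicit Defensive.

Lemma bxorA : associative bxor.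
Proof. by move=> a b c; rewrite /bxor Nat.lxor_assoc. Qed.

Lemma bxorC : commutative bxor.
Proof. exact: Nat.lxor_comm. Qed.

Lemma bxor0n : left_id 0 bxor.
Proof. exact: Nat.lxor_0_l. Qed.

Lemma bxorn0 : right_id 0 bxor.
Proof. exact: Nat.lxor_0_r. Qed.

Lemma bxornn a : bxor a a = 0.
Proof. exact: Nat.lxor_nilpotent. Qed.

Lemma bxor_eq0 a b : (bxor a b == 0) = (a == b).
Proof. by apply/eqP/eqP => [/Nat.lxor_eq | ->]; last exact: bxornn. Qed.

HB.instance Definition _ := Monoid.isComLaw.Build nat 0 bxor bxorA bxorC bxor0n.

Lemma bxorACA : interchange bxor bxor.
Proof. exact: Monoid.mulmACA. Qed.

Lemma bxor_translate a b x : bxor (bxor a x) (bxor b x) = bxor a b.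
Proof. by rewrite bxorACA bxornn bxorn0. Qed.

Lemma bxor_lt16 a b : a < 16 -> b < 16 -> bxor a b < 16.
Proof.
have: all (fun a => all (fun b => bxor a b < 16) (iota 0 16)) (iota 0 16).
  by vm_compute.
move=> /allP/(_ a) bound lt_a lt_b.
by move: bound; rewrite mem_iota lt_a => /(_ isT)/allP/(_ b); rewrite mem_iota lt_b; apply.
Qed.

Lemma bxor_mod_div4 k : k < 16 -> bxor (k %% 4) (4 * (k %/ 4)) = k.
Proof.
have: all (fun k => bxor (k %% 4) (4 * (k %/ 4)) == k) (iota 0 16) by vm_compute.
by move=> /allP split lt_k; apply/eqP/split; rewrite mem_iota.
Qed.

Lemma quadE a b c d : quad a b c d = (d == bxor (bxor a b) c).
Proof. by rewrite /quad bxor_eq0 eq_sym. Qed.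

Lemma quad_dup a b c : quad a b c c = (a == b).
Proof. by rewrite /quad -bxorA bxornn bxorn0 bxor_eq0. Qed.

Lemma quad_translate a b c d x :
  quad (bxor a x) (bxor b x) (bxor c x) (bxor d x) = quad a b c d.
Proof. by rewrite /quad !bxor_translate -bxorA bxor_translate bxorA. Qed.

Lemma quad_big (F : 'I_4 -> nat) :
  quad (F o0) (F o1) (F o2) (F o3) = (\big[bxor/0]_(j < 4) F j == 0).
Proof.
rewrite !big_ord_recl big_ord0 bxorn0 /quad !bxorA.
by congr (bxor (bxor (bxor (F _) (F _)) (F _)) (F _) == 0); apply: val_inj.
Qed.

Lemma quad_perm (s : {perm 'I_4}) (F : 'I_4 -> nat) :
  quad (F (s o0)) (F (s o1)) (F (s o2)) (F (s o3)) = quad (F o0) (F o1) (F o2) (F o3).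
Proof.
rewrite (quad_big (fun j => F (s j))) quad_big.
by rewrite [in RHS](reindex_inj (@perm_inj _ s)).
Qed.

Lemma shuffle_square r c tr S : is_square S -> is_square (S \o shuffle r c tr).
Proof.
case/andP => /forallP rows /forallP cols.
apply/andP; split; apply/forallP => i; case: tr => /=.
- by rewrite (quad_perm r (fun x => S (x, c i))); apply: cols.
- by rewrite (quad_perm c (fun y => S (r i, y))); apply: rows.
- by rewrite (quad_perm c (fun y => S (r i, y))); apply: rows.
- by rewrite (quad_perm r (fun x => S (x, c i))); apply: cols.
Qed.

Lemma shuffle_inj r c tr : injective (shuffle r c tr).
Proof. by case: tr => -[x y] [x' y'] /= [/perm_inj -> /perm_inj ->]. Qed.

Lemma shuffle_inv r c tr :
  exists r' c' tr', cancel (shuffle r' c' tr') (shuffle r c tr).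
Proof.
exists (if tr then c^-1 else r^-1)%g, (if tr then r^-1 else c^-1)%g, tr.
by case: tr => -[x y] /=; rewrite !permKV.
Qed.

Definition quad_equiv (T : Type) (S S' : T -> nat) :=
  forall p q r s, quad (S p) (S q) (S r) (S s) = quad (S' p) (S' q) (S' r) (S' s).

Lemma quad_equiv_eq T (S S' : T -> nat) p q :
  quad_equiv S S' -> (S p == S q) = (S' p == S' q).
Proof.
by move=> equiv; rewrite -(quad_dup _ _ (S p)) -(quad_dup _ _ (S' p)) equiv.
Qed.

Lemma quad_equiv_square (S S' : pos -> nat) :
  quad_equiv S S' -> is_square S = is_square S'.
Proof. by move=> equiv; congr (_ && _); apply: eq_forallb => i; apply: equiv. Qed.

Lemma typeA_quad_equiv_inj (A A' : {ffun pos -> 'I_16}) :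
  typeA A -> typeA A' ->
  quad_equiv (fun p => nat_of_ord (A p)) (fun p => nat_of_ord (A' p)) -> A = A'.
Proof.
case/and3P => _ /forallP row /forallP col; case/and3P => _ /forallP row' /forallP col'.
move=> equiv; apply/ffunP => p; apply: val_inj.
(* [A p] completes a quad with [A (0, A p %% 4)], [A (A p %/ 4, 0)] and [A (0, 0)]. *)
have lt_j : A p %% 4 < 4 by rewrite ltn_mod.
have lt_i : A p %/ 4 < 4 by rewrite ltn_divLR.
have := equiv (o0, Ordinal lt_j) (Ordinal lt_i, o0) (o0, o0) p.
rewrite (eqP (row (Ordinal lt_j))) (eqP (col (Ordinal lt_i))) (eqP (row o0)).
rewrite (eqP (row' (Ordinal lt_j))) (eqP (col' (Ordinal lt_i))) (eqP (row' o0)) /=.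
by rewrite !quadE bxorn0 bxor_mod_div4 // eqxx => /esym/eqP.
Qed.

Lemma ord4_cases (j : 'I_4) : [\/ j = o0, j = o1, j = o2 | j = o3].
Proof.
by case: j => -[|[|[|[|//]]]] ?;
  [constructor 1 | constructor 2 | constructor 3 | constructor 4]; apply: val_inj.
Qed.

Section Normalize.

Variable S : pos -> nat.

Local Notation a := (S (o0, o0)).

(* Bit [i] of [k] selects the [i]-th of these positions; in a type A square
   they hold 1, 2, 4 and 8. *)
Definition axis_pos (i : 'I_4) : pos :=
  match val i with 0 => (o0, o1) | 1 => (o0, o2) | 2 => (o1, o0) | _ => (o2, o0) end.

Definition axis i := bxor (S (axis_pos i)) a.

Definition lin k := \big[bxor/0]_(i < 4) (if Nat.testbit k i then axis i else 0).

Lemma lin_bxor k k' : lin (bxor k k') = bxor (lin k) (lin k').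
Proof.
rewrite /lin -big_split; apply: eq_bigr => i _.
have -> : Nat.testbit (bxor k k') i = xorb (Nat.testbit k i) (Nat.testbit k' i).
  exact: Nat.lxor_spec.
by case: (Nat.testbit k i); case: (Nat.testbit k' i) => /=; rewrite ?bxornn ?bxorn0 ?bxor0n.
Qed.

Lemma linE k : lin k =
  bxor (bxor (bxor (if Nat.testbit k 0 then axis o0 else 0)
                   (if Nat.testbit k 1 then axis o1 else 0))
             (if Nat.testbit k 2 then axis o2 else 0))
       (if Nat.testbit k 3 then axis o3 else 0).
Proof.
rewrite /lin !big_ord_recl big_ord0 bxorn0 !bxorA.
by congr (bxor (bxor (bxor (if _ then axis _ else 0) _) _) _); apply: val_inj.
Qed.

Lemma lin0 : lin 0 = 0.
Proof. by rewrite linE /= !bxorn0. Qed.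

Hypothesis S_square : is_square S.

Lemma lin_row (j : 'I_4) : lin j = bxor (S (o0, j)) a.
Proof.
case: (ord4_cases j) => ->; rewrite linE /axis /= ?bxorn0 ?bxor0n ?bxornn //.
case/andP: S_square => /forallP/(_ o0); rewrite quadE => /eqP -> _.
by rewrite bxor_translate (bxorC _ a) !bxorA bxornn bxor0n.
Qed.

Lemma lin_col (i : 'I_4) : lin (4 * i) = bxor (S (i, o0)) a.
Proof.
case: (ord4_cases i) => ->; rewrite linE /axis /= ?bxorn0 ?bxor0n ?bxornn //.
case/andP: S_square => _ /forallP/(_ o0); rewrite quadE => /eqP ->.
by rewrite bxor_translate (bxorC _ a) !bxorA bxornn bxor0n.
Qed.


Hypothesis S_lt16 : forall p, S p < 16.

Lemma lin_lt16 k : lin k < 16.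
Proof.
apply: (big_ind (fun x => x < 16)) => //; first exact: bxor_lt16.
by move=> i _; case: Nat.testbit => //; apply: bxor_lt16.
Qed.

Hypothesis S_cross : forall i j, S (o0, j) = S (i, o0) -> i = o0 /\ j = o0.

Lemma lin_eq0 k : k < 16 -> (lin k == 0) = (k == 0).
Proof.
move=> lt_k; apply/eqP/eqP => [|->]; last exact: lin0.
have lt_j : k %% 4 < 4 by rewrite ltn_mod.
have lt_i : k %/ 4 < 4 by rewrite ltn_divLR.
rewrite -(bxor_mod_div4 lt_k) lin_bxor.
rewrite (lin_row (Ordinal lt_j)) (lin_col (Ordinal lt_i)) /=.
move/eqP; rewrite bxor_translate bxor_eq0 => /eqP /S_cross [].
by move=> /(congr1 val) /= k_div /(congr1 val) /= k_mod; rewrite (divn_eq k 4) k_div k_mod.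
Qed.

Lemma lin_inj k k' : k < 16 -> k' < 16 -> lin k = lin k' -> k = k'.
Proof.
move=> lt_k lt_k' eq_lin; apply/eqP; rewrite -bxor_eq0 -lin_eq0 ?bxor_lt16 //.
by rewrite lin_bxor eq_lin bxornn.
Qed.

Lemma lin_onto v : v < 16 -> exists k : 'I_16, lin k = v.
Proof.
move=> lt_v; pose linI (k : 'I_16) : 'I_16 := Ordinal (lin_lt16 k).
have linI_inj : injective linI.
  by move=> k k' /(congr1 val) /lin_inj eq_k; apply/val_inj/eq_k.
have /codomP [k /(congr1 val) /= lin_k] := injF_onto linI_inj (Ordinal lt_v).
by exists k.
Qed.

Definition unlin v : 'I_16 := odflt ord0 [pick k : 'I_16 | lin k == v].

Lemma unlinK v : v < 16 -> lin (unlin v) = v.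
Proof.
move=> lt_v; rewrite /unlin; case: pickP => [k /eqP // | none].
by have [k lin_k] := lin_onto lt_v; move: (none k); rewrite lin_k eqxx.
Qed.

Definition normalize : {ffun pos -> 'I_16} := [ffun p => unlin (bxor (S p) a)].

Lemma lin_normalize p : lin (normalize p) = bxor (S p) a.
Proof. by rewrite ffunE unlinK // bxor_lt16. Qed.

Lemma quad_lin (x y z w : 'I_16) :
  quad (lin x) (lin y) (lin z) (lin w) = quad x y z w.
Proof. by rewrite /quad -!lin_bxor lin_eq0 // !bxor_lt16. Qed.

Lemma normalize_quad_equiv : quad_equiv (fun p => nat_of_ord (normalize p)) S.
Proof.
move=> p q r s.
by rewrite -[RHS](quad_translate _ _ _ _ a) -!lin_normalize quad_lin.
Qed.

Lemma normalize_typeA : typeA normalize.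
Proof.
apply/and3P; split.
- by rewrite (quad_equiv_square normalize_quad_equiv).
- apply/forallP => j; apply/eqP/lin_inj => //; first exact: leq_trans (ltn_ord j) _.
  by rewrite lin_normalize lin_row.
- apply/forallP => i; apply/eqP/lin_inj => //; first by have := ltn_ord i; lia.
  by rewrite lin_normalize lin_col.
Qed.

End Normalize.

Lemma eqn_add_dvd m a b x y : a < m -> b < m -> m %| x -> m %| y ->
  (a + x == b + y) = (a == b) && (x == y).
Proof.
move=> lt_a lt_b /dvdnP [u ->] /dvdnP [v ->].
apply/eqP/andP => [eq_sum | [/eqP -> /eqP ->] //].
have eq_ab : a = b.
  by move: (congr1 (modn^~ m) eq_sum); rewrite !(addnC _ (_ * m)) !modnMDl !modn_small.
by move: eq_sum; rewrite eq_ab => /addnI ->.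
Qed.

Lemma legit_pairsE B A : (forall p, 16 %| B p) ->
  (A \in legit_pairs B) =
  typeA A && [forall p, forall q, (A p == A q :> nat) && (B p == B q) ==> (p == q)].
Proof.
move=> B_dvd; rewrite inE; congr (_ && _).
by apply: eq_forallb => p; apply: eq_forallb => q;
  rewrite (eqn_add_dvd (ltn_ord _) (ltn_ord _) (B_dvd p) (B_dvd q)).
Qed.

Lemma legit_pairs_typeA B A : A \in legit_pairs B -> typeA A.
Proof. by rewrite inE => /andP []. Qed.

Section Transfer.

Variables (f : pos -> pos) (B1 B2 : pos -> nat).
Hypothesis f_inj : injective f.
Hypothesis f_square : forall S, is_square S -> is_square (S \o f).
Hypothesis B1_dvd : forall p, 16 %| B1 p.
Hypothesis B2_dvd : forall p, 16 %| B2 p.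
Hypothesis B2_cross : forall i j, B2 (o0, j) = B2 (i, o0).
Hypothesis B_pattern : forall p q, B2 p = B2 q -> B1 (f p) = B1 (f q).

Definition transfer (A : {ffun pos -> 'I_16}) : {ffun pos -> 'I_16} :=
  normalize (fun p => nat_of_ord (A (f p))).

Section LegitPair.

Variable A : {ffun pos -> 'I_16}.
Hypothesis legit_A : A \in legit_pairs B1.

Lemma legit_sep p q : A (f p) = A (f q) :> nat -> B2 p = B2 q -> p = q.
Proof.
move: legit_A; rewrite legit_pairsE // => /andP [_ /forallP sep] eq_A /B_pattern eq_B.
apply: f_inj; apply/eqP.
by move/forallP: (sep (f p)) => /(_ (f q)); rewrite eq_A eq_B !eqxx.
Qed.

Lemma legit_square : is_square (fun p => nat_of_ord (A (f p))).
Proof. by case/legit_pairs_typeA/and3P: legit_A => /f_square. Qed.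

Lemma legit_cross i j : A (f (o0, j)) = A (f (i, o0)) :> nat -> i = o0 /\ j = o0.
Proof. by move/legit_sep/(_ (B2_cross i j)) => -[-> ->]. Qed.

Lemma transfer_quad_equiv :
  quad_equiv (fun p => nat_of_ord (transfer A p)) (fun p => nat_of_ord (A (f p))).
Proof. exact: normalize_quad_equiv legit_square (fun p => ltn_ord _) legit_cross. Qed.

Lemma transfer_legit : transfer A \in legit_pairs B2.
Proof.
rewrite legit_pairsE // (normalize_typeA legit_square (fun p => ltn_ord _) legit_cross) /=.
apply/forallP => p; apply/forallP => q; apply/implyP => /andP [eq_T /eqP eq_B].
apply/eqP/(legit_sep _ eq_B)/eqP.
by rewrite -(quad_equiv_eq p q transfer_quad_equiv).
Qed.

End LegitPair.

Lemma transfer_inj : {in legit_pairs B1 &, injective transfer}.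
Proof.
move=> A A' legit_A legit_A' eq_T.
have [g _ gK] := injF_bij f_inj.
apply: (typeA_quad_equiv_inj (legit_pairs_typeA legit_A) (legit_pairs_typeA legit_A')).
move=> p q r s.
rewrite -[p]gK -[q]gK -[r]gK -[s]gK.
by rewrite -(transfer_quad_equiv legit_A) eq_T (transfer_quad_equiv legit_A').
Qed.

Lemma card_legit_pairs_le : #|legit_pairs B1| <= #|legit_pairs B2|.
Proof.
rewrite -(card_in_imset transfer_inj); apply/subset_leq_card/subsetP.
by move=> _ /imsetP [A legit_A ->]; apply: transfer_legit.
Qed.

End Transfer.

Lemma typeB_dvd16 n B : typeB n B -> forall p, 16 %| B p.
Proof. by case/and4P => _ /forallP B_entries _ _ p; case/andP: (B_entries p). Qed.

Lemma typeB_cross n B : typeB n B -> forall i j, B (o0, j) = B (i, o0).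
Proof. by case/and4P => _ _ /forallP row /forallP col i j; rewrite (eqP (row j)) (eqP (col i)). Qed.

Theorem mainTheorem5 (n : nat) (B1 B2 : pos -> nat) :
  4 <= n -> typeB n B1 -> typeB n B2 ->
  (exists (r c : {perm 'I_4}) (tr : bool),
      forall p q : pos,
        B1 p = B1 q <-> B2 (shuffle r c tr p) = B2 (shuffle r c tr q)) ->
  #|legit_pairs B1| = #|legit_pairs B2|.
Proof.
move=> _ typeB1 typeB2 [r [c [tr pattern]]].
have [r' [c' [tr' shuffleK]]] := shuffle_inv r c tr.
apply/eqP; rewrite eqn_leq; apply/andP; split.
- apply: (@card_legit_pairs_le (shuffle r' c' tr')).
  + exact: can_inj shuffleK.
  + exact: shuffle_square.
  + exact: typeB_dvd16 typeB1.
  + exact: typeB_dvd16 typeB2.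
  + exact: typeB_cross typeB2.
  + by move=> p q eq_B; apply/pattern; rewrite !shuffleK.
- apply: (@card_legit_pairs_le (shuffle r c tr)).
  + exact: shuffle_inj.
  + exact: shuffle_square.
  + exact: typeB_dvd16 typeB2.
  + exact: typeB_dvd16 typeB1.
  + exact: typeB_cross typeB1.
  + by move=> p q /pattern.
Qed.
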